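(* In the setting of the context, let $\mu^*\in W_1$ and $U=B_1(\mu^* )$. Then for every $n\ge1$ the family $\{\mathscr{C}^{(n)}_\mu\}_{\mu\in U}$ is stable at $\mu^*$, i.e. there is $\delta>0$ such that (i) $\mathcal{I}_n(f_\mu)=\mathcal{I}_n(f_{\mu^*})$ for every $\mu\in U\cap B_\delta(\mu^* )$, and (ii) $d_H(A^\alpha_\mu,A^\alpha_{\mu^*})\to0$ as $\mu\to\mu^*$ for every $\alpha\in\mathcal{I}_n(f_{\mu^*})$.
   Context: $X\subset\mathbb{R}^d$ is a compact convex polytope (possibly not full-dimensional) with relative interior $\mathrm{relint}(X)$. $\ell\ge1$, $\mathcal{A}=\{-1,1\}^\ell$, $\varphi_i(x)=\Lambda_ix+b_i$ ($i\in\mathcal{A}$) with $\Lambda_i\in GL_d(\mathbb{R})$, $\|\Lambda_i\|<1$ in some operator norm, and $\varphi_i(X)\subset\mathrm{relint}(X)$. $v^{(1)},\dots,v^{(\ell)}$ are unit vectors in $\mathbb{R}^d$. Label map: $\sigma_\mu(x)=(s_1(x),\dots,s_\ell(x))$, $s_j(x)=-1$ if $\langle v^{(j)},x\rangle\le\mu_j$ and $1$ otherwise; $f_\mu(x)=\varphi_{\sigma_\mu(x)}(x)$ on $X$. $A_{i,\mu}=\mathrm{relint}(X)\cap\mathrm{relint}(\{x\in X:\sigma_\mu(x)=i\})$. For $\alpha=(i_0,\dots,i_{n-1})$: $A^\alpha_\mu=A_{i_0,\mu}\cap\varphi_{i_0}^{-1}(A_{i_1,\mu})\cap\cdots\cap(\varphi_{i_{n-2}}\circ\cdots\circ\varphi_{i_0})^{-1}(A_{i_{n-1},\mu})$.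 $\mathcal{I}_n(f_\mu)=\{\alpha\in\mathcal{A}^n:A^\alpha_\mu\ne\emptyset\}$. $\mathscr{C}^{(1)}_\mu=\{A_{i,\mu}\}_{i\in\mathcal{A}}$ and for $n\ge2$, $\mathscr{C}^{(n)}_\mu=\{A^\alpha_\mu:\alpha\in\mathcal{I}_n(f_\mu)\}$. $Z_\alpha=\{\mu:A^\alpha_\mu\ne\emptyset\}$ and $W_1=\mathbb{R}^\ell\setminus\bigcup_{n\ge1}\bigcup_{\alpha\in\mathcal{A}^n}\partial Z_\alpha$. $d_H$ is the Hausdorff distance. *)

From HB Require Import structures.
From mathcomp Require Import all_boot all_order all_algebra.
From mathcomp Require Import all_classical all_reals all_analysis.
Set Implicit Arguments. Unset Strict Implicit. Unset Printing Implicit Defensive.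
Import Order.TTheory GRing.Theory Num.Theory.
Import numFieldTopology.Exports numFieldNormedType.Exports.
Local Open Scope classical_set_scope.
Local Open Scope ring_scope.

Definition dotv (R : realType) (d : nat) (u x : 'cV[R]_d) : R :=
  \sum_(k < d) u k ord0 * x k ord0.
Definition enorm (R : realType) (d : nat) (x : 'cV[R]_d) : R :=
  Num.sqrt (dotv x x).

Definition eball (R : realType) (d : nat) (c : 'cV[R]_d) (r : R) : set 'cV[R]_d :=
  [set x | enorm (x - c) < r].

Definition affine_hull (R : realType) (d : nat) (S : set 'cV[R]_d) : set 'cV[R]_d :=
  [set x | exists (m : nat) (p : 'I_m -> 'cV[R]_d) (w : 'I_m -> R),
     (forall k, S (p k)) /\ \sum_(k < m) w k = 1 /\ x = \sum_(k < m) w k *: p k].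

Definition relint (R : realType) (d : nat) (S : set 'cV[R]_d) : set 'cV[R]_d :=
  [set x | S x /\ exists2 e : R, 0 < e &
     forall y, affine_hull S y -> enorm (y - x) < e -> S y].

Definition polytope (R : realType) (d : nat) (X : set 'cV[R]_d) : Prop :=
  exists (m : nat) (p : 'I_m.+1 -> 'cV[R]_d),
    X = [set x | exists w : 'I_m.+1 -> R, (forall k, 0 <= w k) /\
           \sum_(k < m.+1) w k = 1 /\ x = \sum_(k < m.+1) w k *: p k].

Definition is_norm (R : realType) (d : nat) (N : 'cV[R]_d -> R) : Prop :=
  (forall x, 0 <= N x) /\ (forall x, N x = 0 -> x = 0) /\
  (forall (a : R) x, N (a *: x) = `|a| * N x) /\
  (forall x y, N (x + y) <= N x + N y).

(* the operator norm of L induced by N is < 1, i.e. ||L||_N <= c for some c < 1 *)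
Definition opnorm_lt1 (R : realType) (d : nat) (N : 'cV[R]_d -> R) (L : 'M[R]_d) : Prop :=
  exists2 c : R, c < 1 & forall x, N (L *m x) <= c * N x.

(* Labels i in A = {-1,1}^l, encoded as boolean functions:
   i j = true  <-> i_j = 1,  i j = false <-> i_j = -1. *)
Definition label (l : nat) := {ffun 'I_l -> bool}.

Section Setting.
Variables (R : realType) (d l : nat).
Variables (X : set 'cV[R]_d) (Lam : label l -> 'M[R]_d) (b : label l -> 'cV[R]_d)
          (v : 'I_l -> 'cV[R]_d).

Definition phi (i : label l) (x : 'cV[R]_d) : 'cV[R]_d := Lam i *m x + b i.

Definition sigma (mu : 'cV[R]_l) (x : 'cV[R]_d) : label l :=
  [ffun j => ~~ (dotv (v j) x <= mu j ord0)].

Definition f (mu : 'cV[R]_l) (x : 'cV[R]_d) : 'cV[R]_d := phi (sigma mu x) x.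

Definition Acell (mu : 'cV[R]_l) (i : label l) : set 'cV[R]_d :=
  relint X `&` relint [set x | X x /\ sigma mu x = i].

Definition phis (s : seq (label l)) (x : 'cV[R]_d) : 'cV[R]_d :=
  foldl (fun y i => phi i y) x s.

Definition Aalpha (n : nat) (mu : 'cV[R]_l) (alpha : n.-tuple (label l)) : set 'cV[R]_d :=
  [set x | forall k : 'I_n, Acell mu (tnth alpha k) (phis (take k alpha) x)].

Definition Iset (n : nat) (mu : 'cV[R]_l) : set (n.-tuple (label l)) :=
  [set alpha | Aalpha mu alpha !=set0].

Definition Zset (n : nat) (alpha : n.-tuple (label l)) : set 'cV[R]_l :=
  [set mu | Aalpha mu alpha !=set0].

Definition bdry (S : set 'cV[R]_l) : set 'cV[R]_l := closure S `\` interior S.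

Definition W1 : set 'cV[R]_l :=
  [set mu | forall (n : nat) (alpha : n.-tuple (label l)), (0 < n)%N ->
     ~ bdry (Zset alpha) mu].

End Setting.
Arguments Iset {R d l} X Lam b v n mu.

Definition edist (R : realType) (d : nat) (x : 'cV[R]_d) (B : set 'cV[R]_d) : \bar R :=
  ereal_inf [set (enorm (x - y))%:E | y in B].
Definition dH (R : realType) (d : nat) (A B : set 'cV[R]_d) : \bar R :=
  maxe (ereal_sup [set edist a B | a in A]) (ereal_sup [set edist y A | y in B]).

From Pilot Require Import Defs.
From HB Require Import structures.
From mathcomp Require Import all_boot all_order all_algebra.
From mathcomp Require Import all_classical all_reals all_analysis.
From mathcomp Require Import lra ring.
Import Order.TTheory GRing.Theory Num.Theory.
Import numFieldTopology.Exports numFieldNormedType.Exports.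
Local Open Scope classical_set_scope.
Local Open Scope ring_scope.

(* The cells A^alpha_mu are cut out of relint X by the finitely many affine
   constraints <v_j, phi_(alpha|k) x> versus mu_j, strict where alpha_k j = 1.
   As mu* lies on the boundary of no Z_alpha, each Z_alpha is constant near
   mu*, and there are finitely many alpha of length n: this is (i).
   For (ii), a point of A^alpha_mu* has positive slack in the strict
   constraints and a point of A^alpha_(mu* - rho) has slack rho in the others;
   a suitable convex combination z has slack >= r > 0 in all of them.  Moving
   any point y of A^alpha_mu or A^alpha_mu* a fraction lam of the way towards
   z lands in both cells once |mu - mu*| is small against lam r, and moves y by
   at most lam diam X. *)

Set Implicit Arguments.
Unset Strict Implicit.
Unset Printing Implicit Defensive.

Section Euclidean.
Variables (R : realType) (d : nat).
Implicit Types (u x y : 'cV[R]_d).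

Lemma dotvDr u x y : dotv u (x + y) = dotv u x + dotv u y.
Proof. by rewrite /dotv -big_split; apply: eq_bigr => k _; rewrite mxE mulrDr. Qed.

Lemma dotvZr u (a : R) x : dotv u (a *: x) = a * dotv u x.
Proof. by rewrite /dotv mulr_sumr; apply: eq_bigr => k _; rewrite mxE mulrCA. Qed.

Lemma dotvBr u x y : dotv u (x - y) = dotv u x - dotv u y.
Proof. by rewrite /dotv -sumrB; apply: eq_bigr => k _; rewrite !mxE mulrBr. Qed.

Lemma enorm_ge0 x : 0 <= enorm x.
Proof. exact: sqrtr_ge0. Qed.

Lemma coord_le_enorm x k : `|x k ord0| <= enorm x.
Proof.
rewrite /enorm -(sqrtr_sqr (x k ord0)); apply: ler_wsqrtr.
rewrite /dotv (bigD1 k) //= expr2 lerDl.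
by apply: sumr_ge0 => i _; rewrite -expr2 sqr_ge0.
Qed.

Lemma enorm_le_sum x : enorm x <= \sum_k `|x k ord0|.
Proof.
have sum_ge0 : 0 <= \sum_k `|x k ord0| by apply: sumr_ge0.
rewrite /enorm -(ger0_norm sum_ge0) -sqrtr_sqr; apply: ler_wsqrtr.
rewrite /dotv expr2 mulr_suml; apply: ler_sum => k _.
rewrite mulr_sumr (bigD1 k) //= -normrM ger0_norm -?expr2 ?sqr_ge0 // lerDl.
by apply: sumr_ge0 => i _; apply: mulr_ge0.
Qed.

Lemma enormZ (a : R) x : enorm (a *: x) = `|a| * enorm x.
Proof.
rewrite /enorm /dotv -sqrtr_sqr -sqrtrM ?sqr_ge0 //; congr Num.sqrt.
by rewrite mulr_sumr; apply: eq_bigr => k _; rewrite !mxE; ring.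
Qed.

Lemma enormN x : enorm (- x) = enorm x.
Proof. by rewrite -scaleN1r enormZ normrN normr1 mul1r. Qed.

Lemma dotv_le u x : `|dotv u x| <= d%:R * (enorm u * enorm x).
Proof.
rewrite /dotv; apply: (le_trans (ler_norm_sum _ _ _)).
rewrite -[d in d%:R]card_ord -sumr_const mulr_suml; apply: ler_sum => k _.
by rewrite mul1r normrM; apply: ler_pM => //; apply: coord_le_enorm.
Qed.

End Euclidean.

Section AffineHull.
Variables (R : realType) (d : nat).
Implicit Types (S X : set 'cV[R]_d) (x y z : 'cV[R]_d).

Lemma sub_affine_hull S : S `<=` affine_hull S.
Proof.
move=> x Sx; exists 1%N, (fun _ => x), (fun _ => 1).
by split => //; rewrite !big_ord1 scale1r.
Qed.

Lemma affine_hullS S1 S2 : S1 `<=` S2 -> affine_hull S1 `<=` affine_hull S2.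
Proof. by move=> S12 x [m [p [w [Sp Hw]]]]; exists m, p, w; split => // k; apply: S12. Qed.

Lemma affine_hull_comb S x y (t : R) : affine_hull S x -> affine_hull S y ->
  affine_hull S ((1 - t) *: x + t *: y).
Proof.
move=> [m1 [p1 [w1 [Sp1 [w1_1 ->]]]]] [m2 [p2 [w2 [Sp2 [w2_1 ->]]]]].
pose p k := match fintype.split k with inl i => p1 i | inr i => p2 i end.
pose w k := match fintype.split k with inl i => (1 - t) * w1 i | inr i => t * w2 i end.
exists (m1 + m2)%N, p, w; split; first by move=> k; rewrite /p; case: (fintype.split k).
rewrite !big_split_ord /p /w.
under eq_bigr => i _ do rewrite (unsplitK (inl i)).
under [X in _ + X = _]eq_bigr => i _ do rewrite (unsplitK (inr i)).
under [X in _ = X + _]eq_bigr => i _ do rewrite (unsplitK (inl i)).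
under [X in _ = _ + X]eq_bigr => i _ do rewrite (unsplitK (inr i)).
rewrite /= -!mulr_sumr w1_1 w2_1 !scaler_sumr; split; first lra.
by congr (_ + _); apply: eq_bigr => i _; rewrite scalerA.
Qed.

Lemma affine_hull_addB S x y z : affine_hull S x -> affine_hull S y -> affine_hull S z ->
  affine_hull S (x + y - z).
Proof.
move=> Hx Hy Hz; have := affine_hull_comb 2 Hz (affine_hull_comb 2^-1 Hx Hy).
by congr affine_hull; apply/matrixP => i j; rewrite !mxE; field.
Qed.

Definition segment_closed X :=
  forall x y (t : R), 0 <= t <= 1 -> X x -> X y -> X ((1 - t) *: x + t *: y).

Lemma polytope_segment_closed X : polytope X -> segment_closed X.
Proof.
move=> [m [p ->]] x y t /andP[t0 t1] [wx [wx0 [wx1 ->]]] [wy [wy0 [wy1 ->]]].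
exists (fun k => (1 - t) * wx k + t * wy k); split.
  by move=> k; apply: addr_ge0; apply: mulr_ge0 => //; lra.
split; first by rewrite big_split /= -!mulr_sumr wx1 wy1; lra.
rewrite !scaler_sumr -big_split; apply: eq_bigr => k _.
by rewrite !scalerA scalerDl.
Qed.

Lemma polytope_bounded X : polytope X ->
  exists2 D : R, 0 < D & forall x y, X x -> X y -> enorm (x - y) <= D.
Proof.
move=> [m [p ->]].
pose M k := \sum_(i < m.+1) `|p i k ord0|.
have coord_le x k : (exists w : 'I_m.+1 -> R, (forall k, 0 <= w k) /\
    \sum_(k < m.+1) w k = 1 /\ x = \sum_(k < m.+1) w k *: p k) -> `|x k ord0| <= M k.
  move=> [w [w0 [w1 ->]]].
  rewrite summxE; apply: (le_trans (ler_norm_sum _ _ _)); apply: ler_sum => i _.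
  rewrite mxE normrM ger0_norm // ler_piMl //.
  by rewrite -w1 (bigD1 i) //= lerDl; apply: sumr_ge0.
have M_ge0 : 0 <= \sum_k (M k + M k).
  by apply: sumr_ge0 => k _; apply: addr_ge0; apply: sumr_ge0.
exists (1 + \sum_k (M k + M k)); first by rewrite ltr_wpDr.
move=> x y Xx Xy; apply: (le_trans (enorm_le_sum _)).
apply: ler_wpDl => //; apply: ler_sum => k _.
by rewrite !mxE; apply: (le_trans (ler_normB _ _)); apply: lerD; apply: coord_le.
Qed.

Lemma relint_sub X : relint X `<=` X.
Proof. by move=> x []. Qed.

Lemma relint_segment_closed X : segment_closed X -> segment_closed (relint X).
Proof.
move=> cX x y t t01 [Xx [ex ex0 Hx]] [Xy [ey ey0 Hy]].
set c := (1 - t) *: x + t *: y.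
have Xc : X c by apply: cX.
split => //; exists (Num.min ex ey); first by rewrite lt_min ex0 ey0.
move=> w Aw; rewrite lt_min => /andP[wcx wcy].
have X_shift a (e : R) : X a -> (forall w', affine_hull X w' -> enorm (w' - a) < e -> X w') ->
    enorm (w - c) < e -> X (a + w - c).
  move=> Xa Ha wce; apply: Ha; first by apply: affine_hull_addB => //; apply: sub_affine_hull.
  by rewrite addrAC [a + w]addrC addrK.
have := cX _ _ _ t01 (X_shift _ _ Xx Hx wcx) (X_shift _ _ Xy Hy wcy).
by congr X; rewrite /c; apply/matrixP => i j; rewrite !mxE; ring.
Qed.

End AffineHull.

Lemma dH_le_of_near (R : realType) d (A B : set 'cV[R]_d) (eps : R) :
  (forall a, A a -> exists2 b, B b & enorm (a - b) <= eps) ->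
  (forall b, B b -> exists2 a, A a & enorm (b - a) <= eps) ->
  (dH A B <= eps%:E)%E.
Proof.
have edist_le (C : set 'cV[R]_d) x : (exists2 y, C y & enorm (x - y) <= eps) ->
    (Defs.edist x C <= eps%:E)%E.
  move=> [y Cy xy]; apply: le_trans (_ : (enorm (x - y))%:E <= _)%E; last by rewrite lee_fin.
  by apply: ereal_inf_lbound; exists y.
move=> AB BA; rewrite /dH ge_max; apply/andP; split; apply: ge_ereal_sup => _ [x Hx <-].
  exact/edist_le/AB.
exact/edist_le/BA.
Qed.

Lemma not_bdry_near_constant (T : topologicalType) (S : set T) x :
  ~ (closure S `\` interior S) x -> \forall y \near x, S y <-> S x.
Proof.
move=> notbd; have [Sx | nSx] := pselect (S x).
  have : interior S x.
    by apply: contrapT => nint; apply: notbd; split => //; apply: subset_closure.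
  by apply: filterS => y Sy.
have : (~` S)° x.
  rewrite interiorC => clx; apply: notbd; split => // /interior_subset.
  exact: nSx.
by apply: filterS => y nSy; split.
Qed.

Lemma nbhs_eball (R : realType) l (c : 'cV[R]_l) (S : set 'cV[R]_l) :
  nbhs c S -> exists2 e : R, 0 < e & eball c e `<=` S.
Proof.
move=> /nbhs_ballP[e e0 He]; exists e => // y cy; apply: He; split => // i j.
rewrite [j]ord1 /ball /= -normrN opprB.
by apply: le_lt_trans cy; have := coord_le_enorm (y - c) i; rewrite !mxE.
Qed.

Lemma eball_subr_const (R : realType) l (c : 'cV[R]_l) (e : R) :
  0 < e -> exists2 rho : R, 0 < rho & eball c e (c - const_mx rho).
Proof.
move=> e0; have l1 : (0 : R) < l%:R + 1 by rewrite ltr_wpDl.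
exists (e / (l%:R + 1)); first by rewrite divr_gt0.
rewrite /eball /= addrAC subrr add0r enormN; apply: le_lt_trans (enorm_le_sum _) _.
under eq_bigr do rewrite mxE.
rewrite sumr_const card_ord ger0_norm ?divr_ge0 ?ltW // -(mulr_natr (e / _)).
by rewrite mulrAC ltr_pdivrMr // ltr_pM2l // ltrDl.
Qed.

Section Itineraries.
Variables (R : realType) (d l : nat) (X : set 'cV[R]_d)
  (Lam : label l -> 'M[R]_d) (b : label l -> 'cV[R]_d) (v : 'I_l -> 'cV[R]_d).
Hypothesis phi_relint : forall i, phi Lam b i @` X `<=` relint X.
Hypothesis v_unit : forall j, enorm (v j) = 1.
Hypothesis X_segment_closed : segment_closed X.
Implicit Types (mu : 'cV[R]_l) (x y z w : 'cV[R]_d).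

Lemma phis_comb s x y (t : R) :
  phis Lam b s ((1 - t) *: x + t *: y) = (1 - t) *: phis Lam b s x + t *: phis Lam b s y.
Proof.
elim: s x y => [//|i s IH] x y; rewrite /phis /= -!/(phis Lam b s _) -IH.
by congr phis; rewrite /phi mulmxDr -!scalemxAr; apply/matrixP => p q; rewrite !mxE; ring.
Qed.

Lemma phis_relint s x : relint X x -> relint X (phis Lam b s x).
Proof.
elim: s x => [//|i s IH] x Xx; apply: IH; apply: phi_relint.
by exists x => //; apply: relint_sub.
Qed.

Definition slack (mu : 'cV[R]_l) (s : label l) (j : 'I_l) (y : 'cV[R]_d) : R :=
  if s j then dotv (v j) y - mu j ord0 else mu j ord0 - dotv (v j) y.

Lemma sigma_slack_ge0 mu s j y : sigma v mu y = s -> 0 <= slack mu s j y.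
Proof. by move<-; rewrite /slack ffunE; case: (leP (dotv (v j) y)) => /= h; lra. Qed.

Lemma sigma_slack_gt0 mu s j y : sigma v mu y = s -> s j -> 0 < slack mu s j y.
Proof. by move<-; rewrite /slack ffunE; case: (leP (dotv (v j) y)) => //= h; lra. Qed.

Lemma slack_gt0_sigma mu s y : (forall j, 0 < slack mu s j y) -> sigma v mu y = s.
Proof.
move=> Hs; apply/ffunP => j; rewrite ffunE; have := Hs j; rewrite /slack.
by case: (s j) => h; [rewrite -ltNge | apply/negbF]; lra.
Qed.

Lemma slack_shift mu1 mu2 s j y :
  slack mu1 s j y - `|mu1 j ord0 - mu2 j ord0| <= slack mu2 s j y.
Proof.
have := lexx `|mu1 j ord0 - mu2 j ord0|; rewrite ler_norml => /andP[h1 h2].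
by rewrite /slack; case: (s j); lra.
Qed.

Lemma slack_comb mu s j x y (t : R) :
  slack mu s j ((1 - t) *: x + t *: y) = (1 - t) * slack mu s j x + t * slack mu s j y.
Proof. by rewrite /slack dotvDr !dotvZr; case: (s j); ring. Qed.

Lemma relint_level_set mu s w (r : R) : 0 < r -> relint X w ->
  (forall j, r <= slack mu s j w) -> relint [set x | X x /\ sigma v mu x = s] w.
Proof.
move=> r0 [Xw [e e0 He]] Hr.
have d1 : (0 : R) < d%:R + 1 by rewrite ltr_wpDl.
have slack_near y : enorm (y - w) < r / (d%:R + 1) -> forall j, 0 < slack mu s j y.
  rewrite ltr_pdivlMr // => yw j.
  have : `|dotv (v j) (y - w)| < r.
    apply: le_lt_trans (dotv_le _ _) _; rewrite v_unit mul1r.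
    by have := enorm_ge0 (y - w); nra.
  rewrite dotvBr ltr_norml => /andP[h1 h2].
  by have := Hr j; rewrite /slack; case: (s j); lra.
split; first by split => //; apply: slack_gt0_sigma => j; apply: lt_le_trans (Hr j).
exists (Num.min e (r / (d%:R + 1))); first by rewrite lt_min e0 divr_gt0.
move=> y Ay; rewrite lt_min => /andP[ye yr].
have Xy : X y by apply: He => //; apply: affine_hullS Ay => z [].
by split => //; apply: slack_gt0_sigma; apply: slack_near.
Qed.

Definition orbit_slack n mu (alpha : n.-tuple (label l)) (k : 'I_n) (j : 'I_l) x :=
  slack mu (tnth alpha k) j (phis Lam b (take k alpha) x).

Lemma orbit_slack_comb n mu (alpha : n.-tuple (label l)) k j x y (t : R) :
  orbit_slack mu alpha k j ((1 - t) *: x + t *: y) =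
  (1 - t) * orbit_slack mu alpha k j x + t * orbit_slack mu alpha k j y.
Proof. by rewrite /orbit_slack phis_comb slack_comb. Qed.

Lemma Aalpha_relint n mu (alpha : n.-tuple (label l)) x :
  (0 < n)%N -> Aalpha X Lam b v mu alpha x -> relint X x.
Proof. by move=> n0 /(_ (Ordinal n0)) []; rewrite take0. Qed.

Lemma Aalpha_orbit_slack_ge0 n mu (alpha : n.-tuple (label l)) k j x :
  Aalpha X Lam b v mu alpha x -> 0 <= orbit_slack mu alpha k j x.
Proof. by move=> /(_ k) [_ [[_ sigma_eq] _]]; apply: sigma_slack_ge0. Qed.

Lemma Aalpha_orbit_slack_gt0 n mu (alpha : n.-tuple (label l)) k j x :
  Aalpha X Lam b v mu alpha x -> tnth alpha k j -> 0 < orbit_slack mu alpha k j x.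
Proof. by move=> /(_ k) [_ [[_ sigma_eq] _]]; apply: sigma_slack_gt0. Qed.

Lemma Aalpha_of_orbit_slack n mu (alpha : n.-tuple (label l)) (r : R) x :
  0 < r -> relint X x -> (forall k j, r <= orbit_slack mu alpha k j x) ->
  Aalpha X Lam b v mu alpha x.
Proof.
move=> r0 Xx Hr k; have Xk := phis_relint (take k alpha) Xx.
by split => //; apply: relint_level_set r0 Xk (Hr k).
Qed.

Lemma exists_orbit_slack_pos n mu (alpha : n.-tuple (label l)) (rho : R) y0 y1 :
  (0 < n)%N -> 0 < rho ->
  Aalpha X Lam b v mu alpha y0 -> Aalpha X Lam b v (mu - const_mx rho) alpha y1 ->
  exists2 r, 0 < r & exists2 z, relint X z & forall k j, r <= orbit_slack mu alpha k j z.
Proof.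
move=> n0 rho0 Ay0 Ay1.
pose r0 := \big[Num.min/1]_(kj : 'I_n * 'I_l | tnth alpha kj.1 kj.2)
             orbit_slack mu alpha kj.1 kj.2 y0.
have r0_gt0 : 0 < r0.
  by apply: lt_bigmin => // -[k j] /= /(Aalpha_orbit_slack_gt0 Ay0).
have r0_le k j : tnth alpha k j -> r0 <= orbit_slack mu alpha k j y0.
  by move=> kj; apply: (bigmin_le_cond 1 (j := (k, j))).
have y1_slack k j : (if tnth alpha k j then - rho else rho) <= orbit_slack mu alpha k j y1.
  have := Aalpha_orbit_slack_ge0 k j Ay1; rewrite /orbit_slack /slack !mxE.
  by case: (tnth alpha k j); lra.
pose t := r0 / (2 * (r0 + rho)).
have t_gt0 : 0 < t by rewrite divr_gt0 // mulr_gt0 // addr_gt0.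
have t_le1 : t <= 1 by rewrite ler_pdivrMr ?mulr_gt0 ?addr_gt0 //; lra.
have t_r0 : (1 - t) * r0 - t * rho = r0 / 2.
  by rewrite /t; field; rewrite gt_eqF // addr_gt0.
exists (Num.min (t * rho) (r0 / 2)); first by rewrite lt_min; apply/andP; split; nra.
have t01 : 0 <= t <= 1 by rewrite (ltW t_gt0) t_le1.
exists ((1 - t) *: y0 + t *: y1).
  exact: relint_segment_closed X_segment_closed _ _ _ t01
    (Aalpha_relint n0 Ay0) (Aalpha_relint n0 Ay1).
move=> k j; rewrite orbit_slack_comb ge_min.
have := Aalpha_orbit_slack_ge0 k j Ay0; have := y1_slack k j; have := r0_le k j.
case: (tnth alpha k j) => [/(_ isT) h0 | _] h1 h2; apply/orP; [right | left]; nra.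
Qed.

Lemma Aalpha_comb_interior n (alpha : n.-tuple (label l)) mu1 mu2 (e lam r : R) y z :
  (0 < n)%N -> 0 <= lam <= 1 -> (forall j, `|mu1 j ord0 - mu2 j ord0| <= e) ->
  e < lam * r -> relint X z -> (forall k j, r <= orbit_slack mu2 alpha k j z) ->
  Aalpha X Lam b v mu1 alpha y -> Aalpha X Lam b v mu2 alpha ((1 - lam) *: y + lam *: z).
Proof.
move=> n0 lam01 mu12 e_lt Xz Hz Ay; have /andP[lam0 lam1] := lam01.
apply: (@Aalpha_of_orbit_slack _ _ _ (lam * r - e)); first by rewrite subr_gt0.
  exact: relint_segment_closed X_segment_closed _ _ _ lam01 (Aalpha_relint n0 Ay) Xz.
move=> k j; rewrite orbit_slack_comb.
have shift : orbit_slack mu1 alpha k j y - `|mu1 j ord0 - mu2 j ord0| <=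
             orbit_slack mu2 alpha k j y by apply: slack_shift.
have := Aalpha_orbit_slack_ge0 k j Ay; have := mu12 j; have := Hz k j.
have := normr_ge0 (mu1 j ord0 - mu2 j ord0); nra.
Qed.

Lemma Aalpha_dH_le n (alpha : n.-tuple (label l)) mu0 (r D eps : R) z :
  (0 < n)%N -> 0 < r -> 0 < D -> 0 < eps ->
  (forall x y, X x -> X y -> enorm (x - y) <= D) ->
  relint X z -> (forall k j, r <= orbit_slack mu0 alpha k j z) ->
  exists2 eta : R, 0 < eta & forall mu, eball mu0 eta mu ->
    (dH (Aalpha X Lam b v mu alpha) (Aalpha X Lam b v mu0 alpha) <= eps%:E)%E.
Proof.
move=> n0 r0 D0 eps0 X_diam Xz Hz.
pose lam := Num.min 1 (eps / D).
have lam_gt0 : 0 < lam by rewrite lt_min ltr01 divr_gt0.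
have lam01 : 0 <= lam <= 1 by rewrite ltW //= ge_min lexx.
have lamD : lam * D <= eps by rewrite -ler_pdivlMr // ge_min lexx orbT.
have lam_r : 0 < lam * r by rewrite mulr_gt0.
exists (lam * r / 4); first by rewrite divr_gt0.
move=> mu mu_near.
have coord_near j : `|mu j ord0 - mu0 j ord0| <= lam * r / 4.
  apply: ltW; apply: le_lt_trans mu_near.
  by have := coord_le_enorm (mu - mu0) j; rewrite !mxE.
have Hz_mu k j : r / 2 <= orbit_slack mu alpha k j z.
  have := slack_shift mu0 mu (tnth alpha k) j (phis Lam b (take k alpha) z).
  have := Hz k j; have := coord_near j; rewrite distrC /orbit_slack.
  by move: lam01 => /andP[_ lam1]; nra.
have comb_near y : X y -> enorm (y - ((1 - lam) *: y + lam *: z)) <= eps.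
  move=> Xy; have -> : y - ((1 - lam) *: y + lam *: z) = lam *: (y - z).
    by apply/matrixP => i j; rewrite !mxE; ring.
  rewrite enormZ gtr0_norm //; apply: le_trans lamD.
  by rewrite ler_pM2l //; apply: X_diam => //; apply: relint_sub.
have quarter_lt_half : lam * r / 4 < lam * (r / 2).
  by rewrite mulrA ltr_pM2l // ltf_pV2 ?ltr_nat ?posrE.
apply: dH_le_of_near => y Ay; exists ((1 - lam) *: y + lam *: z);
  try by apply: comb_near; apply: relint_sub (Aalpha_relint n0 Ay).
- apply: Aalpha_comb_interior n0 lam01 coord_near _ Xz Hz Ay.
  by apply: lt_trans quarter_lt_half _; rewrite ltr_pM2l // ltr_pdivrMr // ltr_pMr // ltr1n.
- apply: Aalpha_comb_interior n0 lam01 _ quarter_lt_half Xz Hz_mu Ay.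
  by move=> j; rewrite distrC.
Qed.

Lemma Iset_locally_constant n mu0 : W1 X Lam b v mu0 -> (0 < n)%N ->
  exists2 delta : R, 0 < delta &
    forall mu, eball mu0 delta mu -> Iset X Lam b v n mu = Iset X Lam b v n mu0.
Proof.
move=> W1_mu0 n0.
have /nbhs_eball[delta delta0 Hdelta] : \forall mu \near mu0,
    forall alpha : n.-tuple (label l), Zset X Lam b v alpha mu <-> Zset X Lam b v alpha mu0.
  apply: (@filter_forall _ _ _ (nbhs mu0)) => alpha.
  exact: (not_bdry_near_constant (W1_mu0 _ alpha n0)).
by exists delta => // mu /Hdelta Hmu; apply/funext => alpha; apply/propext/Hmu.
Qed.

End Itineraries.

Theorem lemma5p5 (R : realType) (d l : nat) (X : set 'cV[R]_d)
  (Lam : label l -> 'M[R]_d) (b : label l -> 'cV[R]_d) (v : 'I_l -> 'cV[R]_d)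
  (mustar : 'cV[R]_l) (n : nat) :
  (0 < l)%N ->
  polytope X ->
  (forall i, Lam i \in unitmx) ->
  (exists N : 'cV[R]_d -> R, is_norm N /\ forall i, opnorm_lt1 N (Lam i)) ->
  (forall i, phi Lam b i @` X `<=` relint X) ->
  (forall j, enorm (v j) = 1) ->
  W1 X Lam b v mustar ->
  (0 < n)%N ->
  let U := eball mustar 1 in
  exists2 delta : R, 0 < delta &
    (forall mu, U mu -> eball mustar delta mu ->
       Iset X Lam b v n mu = Iset X Lam b v n mustar) /\
    (forall alpha : n.-tuple (label l), Iset X Lam b v n mustar alpha ->
       forall eps : R, 0 < eps -> exists2 eta : R, 0 < eta &
         forall mu, U mu -> eball mustar eta mu ->
           (dH (Aalpha X Lam b v mu alpha) (Aalpha X Lam b v mustar alpha)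
              <= eps%:E)%E).
Proof.
move=> _ X_poly _ _ phi_relint v_unit W1_mustar n0 U.
have X_seg := polytope_segment_closed X_poly.
have [D D0 X_diam] := polytope_bounded X_poly.
have [delta delta0 I_const] := Iset_locally_constant W1_mustar n0.
exists delta => //; split; first by move=> mu _ /I_const.
move=> alpha I_alpha eps eps0; have [y0 Ay0] := I_alpha.
have [rho rho0 near_shift] := eball_subr_const mustar delta0.
have [y1 Ay1] : Iset X Lam b v n (mustar - const_mx rho) alpha by rewrite I_const.
have [r r0 [z Xz Hz]] := exists_orbit_slack_pos X_seg n0 rho0 Ay0 Ay1.
have [eta eta0 dH_le] :=
  Aalpha_dH_le phi_relint v_unit X_seg n0 r0 D0 eps0 X_diam Xz Hz.
by exists eta => // mu _ /dH_le.
Qed.
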